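(* Let $\alpha\in(0,1]$, $0\le a<b$, and let $f:[a,b]\to\mathbb{R}$ be $\alpha$-fractional differentiable with $m\le D_\alpha f\le M$ on $[a,b]$ for some real numbers $m<M$. Let $$ \ell=\frac{\alpha(b-a)}{(b^\alpha-a^\alpha)(M-m)}\left(f(b)-f(a)-m\,\frac{b^\alpha-a^\alpha}{\alpha}\right). $$ Then $$ \frac m2\left(\frac{b^\alpha-a^\alpha}{\alpha}\right)^2+\frac{M-m}{2}\left(\frac{b^\alpha-(b-\ell)^\alpha}{\alpha}\right)^2\le\int_a^b f(t)\,d_\alpha t-f(a)\frac{b^\alpha-a^\alpha}{\alpha} $$ $$ \le\frac M2\left(\frac{b^\alpha-a^\alpha}{\alpha}\right)^2+\frac{m-M}{2}\left(\frac{b^\alpha-(a+\ell)^\alpha}{\alpha}\right)^2. $$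
   Context: The conformable $\alpha$-fractional derivative is $D_\alpha f(t):=\lim_{\varepsilon\to 0}\frac{f(t+\varepsilon t^{1-\alpha})-f(t)}{\varepsilon}$ for $t>0$, $D_\alpha f(0):=\lim_{t\to0^+}D_\alpha f(t)$. Integrals: $\int_a^b h(t)\,d_\alpha t:=\int_a^b h(t)t^{\alpha-1}\,dt$.
   Formalization: f is also right-continuous at a, so f(t) → f(a) as t → a⁺, which adds content only when a = 0. Apart from conventions, each condition added here is assumed in the paper as well or is needed for the statement above to hold. *)

From Stdlib Require Import Reals.
From Coquelicot Require Import Coquelicot.
Open Scope R_scope.

(* x^y for x >= 0 (and y > 0): 0^y = 0, otherwise exp (y ln x). *)
Definition rpow (x y : R) : R := if Rle_dec x 0 then 0 else Rpower x y.

(* Conformable alpha-derivative of f : [a,b] -> R at a point t > 0 of [a,b]: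
   lim_{eps -> 0} (f (t + eps t^(1-alpha)) - f t) / eps, where eps ranges over
   nonzero values keeping t + eps t^(1-alpha) inside [a,b] (f only lives on [a,b]). *)
Definition conf_deriv_pos (alpha a b : R) (f : R -> R) (t l : R) : Prop :=
  filterlim (fun eps => (f (t + eps * rpow t (1 - alpha)) - f t) / eps)
    (within (fun eps => eps <> 0 /\ a <= t + eps * rpow t (1 - alpha) <= b)
       (locally 0))
    (locally l).

(* D_alpha f (t) = l on [a,b]; at t = 0 (only possible when a = 0) it is defined
   as lim_{t -> 0+} D_alpha f (t). *)
Definition conf_deriv (alpha a b : R) (f : R -> R) (t l : R) : Prop :=
  (0 < t /\ conf_deriv_pos alpha a b f t l) \/
  (t = 0 /\ (forall s, 0 < s <= b -> exists ls, conf_deriv_pos alpha a b f s ls) /\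
   exists D : R -> R,
     (forall s, 0 < s <= b -> conf_deriv_pos alpha a b f s (D s)) /\
     filterlim D (at_right 0) (locally l)).

Definition conf_differentiable_on (alpha a b : R) (f : R -> R) : Prop :=
  forall t, a <= t <= b -> exists l, conf_deriv alpha a b f t l.

(* Substituting u = t^alpha/alpha turns the alpha-integral of f over [a, b] into the Riemann
   integral of F(u) = f(t) over [A, B] = [a^alpha/alpha, b^alpha/alpha], and the bounds
   m <= D_alpha f <= M become m (v - u) <= F v - F u <= M (v - u) (mean value theorem for
   f - c t^alpha/alpha).  Such an F lies between the broken lines of slopes m then M, resp.
   M then m, through (A, F A) and (B, F B); integrating them gives the two bounds with
   lam = (F B - F A - m (B - A)) / (M - m) and B - A - lam in place of the paper's chord terms,
   and concavity of t^alpha shows these chord terms are at most lam and B - A - lam. *)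

From Stdlib Require Import Reals Lra.
From Coquelicot Require Import Coquelicot.
Open Scope R_scope.

Lemma ball_R (x e y : R) : ball x e y <-> Rabs (y - x) < e.
Proof. reflexivity. Qed.

Lemma le_increment_of_le_derive (h k : R -> R) s t : s <= t ->
  (forall x, s <= x <= t -> continuous h x /\ continuous k x) ->
  (forall x, s < x < t -> exists dh dk, is_derive h x dh /\ is_derive k x dk /\ dh <= dk) ->
  h t - h s <= k t - k s.
Proof.
  intros Hst Hcont Hder.
  set (g := fun x => k x - h x).
  (* The mean-value point may be an endpoint, so MVT is fed the clipped derivative. *)
  destruct (MVT_gen g s t (fun x => Rmax 0 (Derive g x))) as [c [_ Hc]].
  - intros x Hx. rewrite Rmin_left, Rmax_right in Hx by lra.
    destruct (Hder x Hx) as (dh & dk & Hh & Hk & Hle).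
    assert (Hg : is_derive g x (dk - dh)) by (apply (is_derive_minus k h); assumption).
    rewrite (is_derive_unique _ _ _ Hg), Rmax_right by lra. exact Hg.
  - intros x Hx. rewrite Rmin_left, Rmax_right in Hx by lra.
    apply continuity_pt_filterlim. destruct (Hcont x Hx).
    apply (continuous_minus k h); assumption.
  - assert (0 <= g t - g s) by (rewrite Hc; apply Rmult_le_pos; [apply Rmax_l | lra]).
    unfold g in *. lra.
Qed.

Lemma rpow_Rpower x p : 0 < x -> rpow x p = Rpower x p.
Proof. intros Hx; unfold rpow; destruct (Rle_dec x 0); [lra | reflexivity]. Qed.

Lemma rpow_nonpos x p : x <= 0 -> rpow x p = 0.
Proof. intros Hx; unfold rpow; destruct (Rle_dec x 0); [reflexivity | lra]. Qed.

Lemma rpow_gt0 x p : 0 < x -> 0 < rpow x p.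
Proof. intros Hx; rewrite rpow_Rpower by exact Hx; apply exp_pos. Qed.

Lemma rpow_ge0 x p : 0 <= rpow x p.
Proof.
  destruct (Rle_or_lt x 0) as [Hx | Hx].
  - rewrite rpow_nonpos by exact Hx; lra.
  - left; apply rpow_gt0, Hx.
Qed.

Lemma rpow_1 x : 0 <= x -> rpow x 1 = x.
Proof.
  intros [Hx | <-].
  - rewrite rpow_Rpower by exact Hx; apply Rpower_1, Hx.
  - apply rpow_nonpos; lra.
Qed.

Lemma rpow_rpow x p q : 0 <= x -> rpow (rpow x p) q = rpow x (p * q).
Proof.
  intros [Hx | <-].
  - rewrite (rpow_Rpower (rpow x p)) by (apply rpow_gt0, Hx).
    rewrite !rpow_Rpower by exact Hx. apply Rpower_mult.
  - rewrite !(rpow_nonpos 0) by lra. reflexivity.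
Qed.

Lemma rpow_opp x p : 0 < x -> rpow x (- p) = / rpow x p.
Proof. intros Hx; rewrite !rpow_Rpower by exact Hx; apply Rpower_Ropp. Qed.

Lemma rpow_le p x y : 0 < p -> 0 <= x <= y -> rpow x p <= rpow y p.
Proof.
  intros Hp [[Hx | <-] Hxy].
  - rewrite !rpow_Rpower by lra. apply Rle_Rpower_l; lra.
  - rewrite (rpow_nonpos 0) by lra. apply rpow_ge0.
Qed.

Lemma rpow_lt p x y : 0 < p -> 0 <= x < y -> rpow x p < rpow y p.
Proof.
  intros Hp [[Hx | <-] Hxy].
  - rewrite !rpow_Rpower by lra. apply Rlt_Rpower_l; lra.
  - rewrite (rpow_nonpos 0) by lra. apply rpow_gt0, Hxy.
Qed.

Lemma rpow_le_nonpos p x y : p <= 0 -> 0 < x <= y -> rpow y p <= rpow x p.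
Proof.
  intros Hp [Hx Hxy]. rewrite !rpow_Rpower by lra. unfold Rpower.
  assert (ln x <= ln y) by (apply ln_le; lra).
  destruct (Req_dec (p * ln y) (p * ln x)) as [-> | Hne]; [lra |].
  left; apply exp_increasing; nra.
Qed.

Lemma is_derive_rpow p x : 0 < x -> is_derive (fun t => rpow t p) x (p * rpow x (p - 1)).
Proof.
  intros Hx. apply is_derive_ext_loc with (fun t => Rpower t p).
  - exists (mkposreal x Hx). intros y Hy.
    rewrite ball_R in Hy. apply Rabs_lt_between in Hy. simpl in Hy.
    symmetry; apply rpow_Rpower; lra.
  - rewrite rpow_Rpower by exact Hx. apply is_derive_Reals, derivable_pt_lim_power, Hx.
Qed.

Lemma continuous_rpow p x : 0 < p -> continuous (fun t => rpow t p) x.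
Proof.
  intros Hp. destruct (Rlt_or_le 0 x) as [Hx | [Hx | ->]].
  - apply (ex_derive_continuous (fun t => rpow t p)). eexists; apply is_derive_rpow, Hx.
  - apply continuous_ext_loc with (fun _ => 0).
    + exists (mkposreal (- x) ltac:(lra)). intros y Hy.
      rewrite ball_R in Hy. apply Rabs_lt_between in Hy. simpl in Hy. rewrite rpow_nonpos; lra.
    + apply continuous_const.
  - (* near 0, y^p < eps as soon as |y| < eps^(1/p) *)
    apply filterlim_locally. intros eps.
    exists (mkposreal (rpow eps (1 / p)) (rpow_gt0 _ _ (cond_pos eps))).
    intros y Hy. rewrite ball_R in Hy |- *. simpl in Hy.
    rewrite (rpow_nonpos 0), Rminus_0_r by lra. rewrite Rminus_0_r in Hy.
    destruct (Rle_or_lt y 0) as [Hy0 | Hy0].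
    + rewrite rpow_nonpos, Rabs_R0 by exact Hy0. apply cond_pos.
    + rewrite Rabs_pos_eq in Hy by lra. rewrite Rabs_pos_eq by apply rpow_ge0.
      apply Rlt_le_trans with (rpow (rpow eps (1 / p)) p).
      * apply rpow_lt; lra.
      * rewrite rpow_rpow by (left; apply cond_pos).
        replace (1 / p * p) with 1 by (field; lra). rewrite rpow_1 by (left; apply cond_pos). lra.
Qed.

Lemma rpow_tangent p x y : 0 < p <= 1 -> 0 <= x -> 0 < y ->
  rpow x p <= rpow y p + p * rpow y (p - 1) * (x - y).
Proof.
  intros Hp Hx Hy.
  set (tangent_line := fun t => p * rpow y (p - 1) * t).
  assert (Hcont : forall t, continuous (fun t => rpow t p) t /\ continuous tangent_line t).
  { intros t. split; [apply continuous_rpow; lra |].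
    apply (ex_derive_continuous tangent_line). unfold tangent_line. auto_derive; auto. }
  assert (Hder : forall t, is_derive tangent_line t (p * rpow y (p - 1))).
  { intros t. unfold tangent_line. auto_derive; auto; ring. }
  (* the derivative p t^(p-1) of t^p is nonincreasing since p - 1 <= 0 *)
  destruct (Rle_or_lt y x) as [Hyx | Hxy].
  - pose proof (le_increment_of_le_derive (fun t => rpow t p) tangent_line y x Hyx
      (fun t _ => Hcont t)) as Hinc.
    cut (rpow x p - rpow y p <= tangent_line x - tangent_line y); [unfold tangent_line; lra |].
    apply Hinc. intros t Ht. exists (p * rpow t (p - 1)), (p * rpow y (p - 1)).
    split; [apply is_derive_rpow; lra | split; [apply Hder |]].
    apply Rmult_le_compat_l; [lra |]. apply rpow_le_nonpos; lra.
  - pose proof (le_increment_of_le_derive tangent_line (fun t => rpow t p) x y (Rlt_le _ _ Hxy)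
      (fun t _ => let (H1, H2) := Hcont t in conj H2 H1)) as Hinc.
    cut (tangent_line y - tangent_line x <= rpow y p - rpow x p); [unfold tangent_line; lra |].
    apply Hinc. intros t Ht. exists (p * rpow y (p - 1)), (p * rpow t (p - 1)).
    split; [apply Hder | split; [apply is_derive_rpow; lra |]].
    apply Rmult_le_compat_l; [lra |]. apply rpow_le_nonpos; lra.
Qed.

Lemma rpow_concave_chord p a b th : 0 < p <= 1 -> 0 <= a < b -> 0 <= th <= 1 ->
  0 <= rpow b p - rpow (b - th * (b - a)) p <= th * (rpow b p - rpow a p).
Proof.
  intros Hp Hab Hth. set (c := b - th * (b - a)).
  assert (Hac : a <= c <= b) by (unfold c; nra).
  split; [assert (rpow c p <= rpow b p) by (apply rpow_le; lra); lra |].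
  destruct (Req_dec c 0) as [Hc0 | Hc0].
  - (* c = 0 forces a = 0 and th = 1 *)
    assert (a = 0) by lra. assert (th = 1) by (unfold c in Hc0; subst a; nra).
    subst. rewrite Hc0, !(rpow_nonpos 0) by lra. lra.
  - pose proof (rpow_tangent p a c Hp ltac:(lra) ltac:(lra)) as Ha.
    pose proof (rpow_tangent p b c Hp ltac:(lra) ltac:(lra)) as Hb.
    assert (Hw : th * (a - c) + (1 - th) * (b - c) = 0) by (unfold c; ring).
    set (s := p * rpow c (p - 1)) in *.
    assert (th * rpow a p <= th * (rpow c p + s * (a - c))) by (apply Rmult_le_compat_l; lra).
    assert ((1 - th) * rpow b p <= (1 - th) * (rpow c p + s * (b - c)))
      by (apply Rmult_le_compat_l; lra).
    assert (th * (s * (a - c)) + (1 - th) * (s * (b - c)) = 0) by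
      (replace (th * (s * (a - c)) + (1 - th) * (s * (b - c)))
         with (s * (th * (a - c) + (1 - th) * (b - c))) by ring; rewrite Hw; ring).
    nra.
Qed.

Definition continuous_in (a b : R) (f : R -> R) (x : R) : Prop :=
  forall eps, 0 < eps -> exists d, 0 < d /\
    forall y, a <= y <= b -> Rabs (y - x) < d -> Rabs (f y - f x) < eps.

Definition is_derive_in (a b : R) (f : R -> R) (x l : R) : Prop :=
  forall eps, 0 < eps -> exists d, 0 < d /\
    forall y, a <= y <= b -> y <> x -> Rabs (y - x) < d ->
      Rabs ((f y - f x) / (y - x) - l) < eps.

Lemma conf_deriv_pos_is_derive_in alpha a b f t l : 0 < t ->
  conf_deriv_pos alpha a b f t l -> is_derive_in a b f t (l * rpow t (alpha - 1)).
Proof.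
  intros Ht Hf eps Heps.
  set (c := rpow t (1 - alpha)).
  assert (Hc : 0 < c) by apply rpow_gt0, Ht.
  destruct (Hf _ (locally_ball l (mkposreal _ (Rmult_lt_0_compat _ _ Heps Hc)))) as [d Hd].
  exists (d * c). split; [apply Rmult_lt_0_compat; [apply cond_pos | exact Hc] |].
  intros y Hy Hyt Hyd.
  set (ep := (y - t) / c).
  assert (Hy_ep : t + ep * c = y) by (unfold ep; field; lra).
  assert (Hep : Rabs ep < d).
  { unfold ep. rewrite Rabs_div, (Rabs_pos_eq c) by lra.
    apply Rmult_lt_reg_r with c; [exact Hc |]. unfold Rdiv. rewrite Rmult_assoc, Rinv_l; lra. }
  assert (Hep0 : ep <> 0).
  { unfold ep. intros E. apply Hyt. apply Rminus_diag_uniq.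
    apply (Rmult_eq_reg_r (/ c)); [rewrite Rmult_0_l; exact E | apply Rinv_neq_0_compat; lra]. }
  specialize (Hd ep). rewrite ball_R, Rminus_0_r in Hd. fold c in Hd. rewrite Hy_ep in Hd.
  specialize (Hd Hep (conj Hep0 Hy)). rewrite ball_R in Hd. simpl in Hd.
  replace (alpha - 1) with (- (1 - alpha)) by ring. rewrite rpow_opp by exact Ht. fold c.
  replace ((f y - f t) / (y - t) - l * / c) with (((f y - f t) / ep - l) / c)
    by (unfold ep; field; repeat split; lra).
  rewrite Rabs_div, (Rabs_pos_eq c) by lra.
  apply Rmult_lt_reg_r with c; [exact Hc |]. unfold Rdiv. rewrite Rmult_assoc, Rinv_l; lra.
Qed.

Lemma is_derive_in_continuous_in a b f x l : is_derive_in a b f x l -> continuous_in a b f x.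
Proof.
  intros Hf eps Heps.
  destruct (Hf 1 Rlt_0_1) as [d [Hd Hslope]].
  set (K := Rabs l + 1).
  assert (HK : 0 < K) by (unfold K; pose proof (Rabs_pos l); lra).
  exists (Rmin d (eps / K)). split; [apply Rmin_glb_lt; [exact Hd | apply Rdiv_lt_0_compat; lra] |].
  intros y Hy Hyx.
  destruct (Req_dec y x) as [-> | Hne]; [rewrite Rminus_diag, Rabs_R0; exact Heps |].
  assert (Hyx1 : Rabs (y - x) < d) by (eapply Rlt_le_trans; [exact Hyx | apply Rmin_l]).
  assert (Hyx2 : Rabs (y - x) < eps / K) by (eapply Rlt_le_trans; [exact Hyx | apply Rmin_r]).
  assert (HsK : Rabs ((f y - f x) / (y - x)) <= K).
  { pose proof (Hslope y Hy Hne Hyx1). pose proof (Rabs_triang_inv ((f y - f x) / (y - x)) l).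
    unfold K; lra. }
  replace (f y - f x) with ((f y - f x) / (y - x) * (y - x)) by (field; lra).
  rewrite Rabs_mult.
  apply Rle_lt_trans with (K * Rabs (y - x)).
  - apply Rmult_le_compat_r; [apply Rabs_pos | exact HsK].
  - apply Rmult_lt_reg_r with (/ K); [apply Rinv_0_lt_compat, HK |].
    replace (K * Rabs (y - x) * / K) with (Rabs (y - x)) by (field; lra). exact Hyx2.
Qed.

(* f is only continuous within [a, b] (at a only from the right); f (clamp a b t) is continuous
   on all of R, as the Riemann-integral and mean-value lemmas require. *)
Definition clamp (a b t : R) : R := Rmax a (Rmin b t).

Lemma clamp_in a b t : a <= b -> a <= clamp a b t <= b.
Proof. intros; unfold clamp, Rmax, Rmin; repeat destruct Rle_dec; lra. Qed.

Lemma clamp_id a b t : a <= t <= b -> clamp a b t = t.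
Proof. intros; unfold clamp, Rmax, Rmin; repeat destruct Rle_dec; lra. Qed.

Lemma clamp_lipschitz a b x y : a <= b -> Rabs (clamp a b y - clamp a b x) <= Rabs (y - x).
Proof.
  intros; unfold clamp, Rmax, Rmin, Rabs; repeat destruct Rle_dec; repeat destruct Rcase_abs; lra.
Qed.

Lemma continuous_clamp a b f x : a <= b -> continuous_in a b f (clamp a b x) ->
  continuous (fun t => f (clamp a b t)) x.
Proof.
  intros Hab Hf. apply filterlim_locally. intros eps.
  destruct (Hf eps (cond_pos eps)) as [d [Hd Hfd]].
  exists (mkposreal d Hd). intros y Hy. rewrite ball_R in Hy |- *.
  apply Hfd; [apply clamp_in, Hab |].
  eapply Rle_lt_trans; [apply clamp_lipschitz, Hab | exact Hy].
Qed.

Lemma is_derive_clamp a b f x l : a < x < b -> is_derive_in a b f x l ->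
  is_derive (fun t => f (clamp a b t)) x l.
Proof.
  intros Hx Hf. apply is_derive_Reals. intros eps Heps.
  destruct (Hf eps Heps) as [d [Hd Hfd]].
  assert (Hdel : 0 < Rmin d (Rmin (x - a) (b - x))) by (repeat apply Rmin_glb_lt; lra).
  exists (mkposreal _ Hdel). intros h Hh0 Hh. simpl in Hh.
  assert (Hhd : Rabs h < d) by (eapply Rlt_le_trans; [exact Hh | apply Rmin_l]).
  assert (Hh' : Rabs h < Rmin (x - a) (b - x)) by (eapply Rlt_le_trans; [exact Hh | apply Rmin_r]).
  pose proof (Rmin_l (x - a) (b - x)). pose proof (Rmin_r (x - a) (b - x)).
  apply Rabs_lt_between in Hh'.
  rewrite !clamp_id by lra.
  replace h with (x + h - x) at 2 by ring.
  apply Hfd; [lra | lra | replace (x + h - x) with h by ring; exact Hhd].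
Qed.

Lemma continuous_in_at_right a b f : filterlim f (at_right a) (locally (f a)) ->
  continuous_in a b f a.
Proof.
  intros Hf eps Heps.
  destruct (Hf _ (locally_ball (f a) (mkposreal eps Heps))) as [d Hd].
  exists d. split; [apply cond_pos |]. intros y Hy Hya.
  destruct (Req_dec y a) as [-> | Hne]; [rewrite Rminus_diag, Rabs_R0; exact Heps |].
  exact (Hd y Hya ltac:(lra)).
Qed.

Definition slopes_in (m M A B : R) (F : R -> R) : Prop :=
  forall u v, A <= u -> u <= v -> v <= B -> m * (v - u) <= F v - F u <= M * (v - u).

Lemma slopes_in_opp (m M A B : R) (F : R -> R) :
  slopes_in m M A B F -> slopes_in (- M) (- m) A B (fun u => - F u).
Proof. intros HF u v Hu Huv Hv. destruct (HF u v Hu Huv Hv). lra. Qed.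

Lemma RInt_affine (p q r x y : R) :
  RInt (fun u => p + q * (u - r)) x y = p * (y - x) + q * ((y - r) ^ 2 - (x - r) ^ 2) / 2.
Proof.
  set (G := fun u => p * u + q * (u - r) ^ 2 / 2).
  assert (HG : is_RInt (fun u => p + q * (u - r)) x y (minus (G y) (G x))).
  { apply (is_RInt_derive G).
    - intros u _. unfold G. auto_derive; auto. field.
    - intros u _. apply (ex_derive_continuous (fun u => p + q * (u - r))). auto_derive; auto. }
  rewrite (is_RInt_unique _ _ _ _ HG). unfold minus, plus, opp, G; simpl. field.
Qed.

Lemma ex_RInt_affine (p q r x y : R) : ex_RInt (fun u => p + q * (u - r)) x y.
Proof.
  apply (ex_RInt_continuous (V := R_CompleteNormedModule)). intros u _.
  apply (ex_derive_continuous (fun u => p + q * (u - r))). auto_derive; auto.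
Qed.

Lemma slopes_in_corner (m M A B : R) (F : R -> R) : A <= B -> m < M -> slopes_in m M A B F ->
  0 <= (F B - F A - m * (B - A)) / (M - m) <= B - A.
Proof.
  intros HAB HmM HF. destruct (HF A B) as [H1 H2]; try lra. split.
  - apply Rdiv_le_0_compat; lra.
  - apply Rmult_le_reg_r with (M - m); [lra |]. unfold Rdiv. rewrite Rmult_assoc, Rinv_l; lra.
Qed.

(* F lies above the broken line of slopes m then M through (A, F A) and (B, F B),
   whose corner sits at B - lam. *)
Lemma RInt_slopes_in_lower (m M A B : R) (F : R -> R) :
  A <= B -> m < M -> (forall u, continuous F u) -> slopes_in m M A B F ->
  let lam := (F B - F A - m * (B - A)) / (M - m) in
  m / 2 * (B - A) ^ 2 + (M - m) / 2 * lam ^ 2 <= RInt F A B - F A * (B - A).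
Proof.
  intros HAB HmM Hc HF lam.
  assert (HexF : forall x y, ex_RInt F x y)
    by (intros; apply (ex_RInt_continuous (V := R_CompleteNormedModule)); auto).
  pose proof (slopes_in_corner m M A B F HAB HmM HF) as Hlam. fold lam in Hlam.
  assert (HFB : F B = F A + m * (B - A) + (M - m) * lam) by (unfold lam; field; lra).
  set (c := B - lam).
  rewrite <- (RInt_Chasles F A c B) by auto.
  assert (I1 : RInt (fun u => F A + m * (u - A)) A c <= RInt F A c).
  { apply RInt_le; auto; [unfold c; lra | apply ex_RInt_affine |].
    intros x Hx. destruct (HF A x); unfold c in *; lra. }
  assert (I2 : RInt (fun u => F B + M * (u - B)) c B <= RInt F c B).
  { apply RInt_le; auto; [unfold c; lra | apply ex_RInt_affine |].
    intros x Hx. destruct (HF x B); unfold c in *; lra. }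
  rewrite !RInt_affine in I1, I2. unfold plus; simpl.
  assert (E : F A * (c - A) + m * ((c - A) ^ 2 - (A - A) ^ 2) / 2 +
              (F B * (B - c) + M * ((B - B) ^ 2 - (c - B) ^ 2) / 2) - F A * (B - A)
              = m / 2 * (B - A) ^ 2 + (M - m) / 2 * lam ^ 2)
    by (rewrite HFB; unfold c; field).
  lra.
Qed.

Lemma RInt_slopes_in_upper (m M A B : R) (F : R -> R) :
  A <= B -> m < M -> (forall u, continuous F u) -> slopes_in m M A B F ->
  let lam := (F B - F A - m * (B - A)) / (M - m) in
  RInt F A B - F A * (B - A) <= M / 2 * (B - A) ^ 2 - (M - m) / 2 * (B - A - lam) ^ 2.
Proof.
  intros HAB HmM Hc HF lam.
  pose proof (RInt_slopes_in_lower (- M) (- m) A B (fun u => - F u) HAB ltac:(lra)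
    (fun u => continuous_opp F u (Hc u)) (slopes_in_opp _ _ _ _ _ HF)) as Hlow.
  cbv zeta in Hlow.
  assert (HexF : ex_RInt F A B)
    by (apply (ex_RInt_continuous (V := R_CompleteNormedModule)); auto).
  replace (RInt (fun u => - F u) A B) with (- RInt F A B) in Hlow
    by (symmetry; exact (RInt_opp F A B HexF)).
  replace ((- F B - - F A - - M * (B - A)) / (- m - - M)) with (B - A - lam) in Hlow
    by (unfold lam; field; lra).
  lra.
Qed.

(* t^alpha / alpha is the alpha-primitive of 1: d_alpha t = d (t^alpha / alpha). *)
Definition conf_var (alpha t : R) : R := rpow t alpha / alpha.

Lemma conf_var_sub alpha x y : alpha <> 0 ->
  conf_var alpha y - conf_var alpha x = (rpow y alpha - rpow x alpha) / alpha.
Proof. intros Halpha. unfold conf_var. field. exact Halpha. Qed.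

Definition conf_var_inv (alpha u : R) : R := rpow (alpha * u) (1 / alpha).

Lemma is_derive_conf_var alpha t : 0 < alpha -> 0 < t ->
  is_derive (conf_var alpha) t (rpow t (alpha - 1)).
Proof.
  intros Halpha Ht. unfold conf_var.
  replace (rpow t (alpha - 1)) with (/ alpha * (alpha * rpow t (alpha - 1))) by (field; lra).
  eapply is_derive_ext; [| exact (is_derive_scal _ _ (/ alpha) _ (is_derive_rpow alpha t Ht))].
  intros u. simpl. unfold Rdiv. apply Rmult_comm.
Qed.

Lemma continuous_conf_var alpha t : 0 < alpha -> continuous (conf_var alpha) t.
Proof.
  intros Halpha. unfold conf_var.
  apply (continuous_scal_l (fun t => rpow t alpha) (/ alpha)), continuous_rpow, Halpha.
Qed.

Lemma conf_var_inv_conf_var alpha t : 0 < alpha -> 0 <= t ->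
  conf_var_inv alpha (conf_var alpha t) = t.
Proof.
  intros Halpha Ht. unfold conf_var_inv, conf_var.
  replace (alpha * (rpow t alpha / alpha)) with (rpow t alpha) by (field; lra).
  rewrite rpow_rpow by exact Ht. replace (alpha * (1 / alpha)) with 1 by (field; lra).
  apply rpow_1, Ht.
Qed.

Lemma conf_var_conf_var_inv alpha u : 0 < alpha -> 0 <= u ->
  conf_var alpha (conf_var_inv alpha u) = u.
Proof.
  intros Halpha Hu. unfold conf_var_inv, conf_var.
  rewrite rpow_rpow by nra. replace (1 / alpha * alpha) with 1 by (field; lra).
  rewrite rpow_1 by nra. field; lra.
Qed.

Lemma conf_var_inv_le alpha u v : 0 < alpha -> 0 <= u <= v ->
  conf_var_inv alpha u <= conf_var_inv alpha v.
Proof.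
  intros Halpha Huv. apply rpow_le; [apply Rdiv_lt_0_compat; lra | nra].
Qed.

Lemma continuous_conf_var_inv alpha u : 0 < alpha -> continuous (conf_var_inv alpha) u.
Proof.
  intros Halpha. unfold conf_var_inv.
  apply (continuous_comp (fun u => alpha * u) (fun x => rpow x (1 / alpha))).
  - apply (ex_derive_continuous (fun u => alpha * u)). auto_derive; auto.
  - apply continuous_rpow, Rdiv_lt_0_compat; lra.
Qed.

Section ConformableMeanValue.

Variables (alpha a b m M : R) (f : R -> R).
Hypothesis Halpha : 0 < alpha.
Hypothesis Ha : 0 <= a.
Hypothesis Hab : a <= b.
Hypothesis Hdiff : conf_differentiable_on alpha a b f.
Hypothesis Hbounds : forall t l, a <= t <= b -> conf_deriv alpha a b f t l -> m <= l <= M.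
Hypothesis Hcont : filterlim f (at_right a) (locally (f a)).

Lemma conf_is_derive_in t : a <= t <= b -> 0 < t ->
  exists l, m <= l <= M /\ is_derive_in a b f t (l * rpow t (alpha - 1)).
Proof.
  intros Ht Ht0. destruct (Hdiff t Ht) as [l Hl].
  exists l. split; [exact (Hbounds t l Ht Hl) |].
  destruct Hl as [[_ Hl] | [Ht' _]]; [| lra].
  apply conf_deriv_pos_is_derive_in; assumption.
Qed.

Lemma continuous_conf_clamp x : continuous (fun t => f (clamp a b t)) x.
Proof.
  apply continuous_clamp; [exact Hab |].
  pose proof (clamp_in a b x Hab) as Hx.
  destruct (Req_dec (clamp a b x) a) as [-> | Hne].
  - apply continuous_in_at_right, Hcont.
  - destruct (conf_is_derive_in (clamp a b x) Hx ltac:(lra)) as [l [_ Hl]].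
    exact (is_derive_in_continuous_in _ _ _ _ _ Hl).
Qed.

Lemma conf_increment_bounds s t : a <= s <= t -> t <= b ->
  m * (conf_var alpha t - conf_var alpha s) <= f t - f s <=
  M * (conf_var alpha t - conf_var alpha s).
Proof.
  intros Hs Ht.
  set (g := fun t => f (clamp a b t)).
  replace (f t - f s) with (g t - g s) by (unfold g; rewrite !clamp_id by lra; reflexivity).
  assert (Hc : forall c x, continuous (fun t => c * conf_var alpha t) x /\ continuous g x).
  { intros c x. split; [| apply continuous_conf_clamp].
    apply (continuous_scal_r c (conf_var alpha)), continuous_conf_var, Halpha. }
  assert (Hd : forall c x, s < x < t -> exists l, m <= l <= M /\
      is_derive (fun t => c * conf_var alpha t) x (c * rpow x (alpha - 1)) /\
      is_derive g x (l * rpow x (alpha - 1))).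
  { intros c x Hx. destruct (conf_is_derive_in x ltac:(lra) ltac:(lra)) as [l [Hl Hder]].
    exists l. split; [exact Hl | split].
    - apply (is_derive_scal (conf_var alpha)), is_derive_conf_var; lra.
    - apply is_derive_clamp; [lra | exact Hder]. }
  split.
  - rewrite Rmult_minus_distr_l.
    apply (le_increment_of_le_derive (fun t => m * conf_var alpha t) g s t ltac:(lra)).
    + intros x _. apply Hc.
    + intros x Hx. destruct (Hd m x Hx) as (l & Hl & Hh & Hk).
      exists (m * rpow x (alpha - 1)), (l * rpow x (alpha - 1)). do 2 (split; [assumption |]).
      apply Rmult_le_compat_r; [apply rpow_ge0 | lra].
  - rewrite Rmult_minus_distr_l.
    apply (le_increment_of_le_derive g (fun t => M * conf_var alpha t) s t ltac:(lra)).
    + intros x _. destruct (Hc M x). split; assumption.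
    + intros x Hx. destruct (Hd M x Hx) as (l & Hl & Hh & Hk).
      exists (l * rpow x (alpha - 1)), (M * rpow x (alpha - 1)). do 2 (split; [assumption |]).
      apply Rmult_le_compat_r; [apply rpow_ge0 | lra].
Qed.

Lemma exists_conf_subst : exists F : R -> R,
  slopes_in m M (conf_var alpha a) (conf_var alpha b) F /\ (forall u, continuous F u) /\
  forall t, a <= t <= b -> F (conf_var alpha t) = f t.
Proof.
  exists (fun u => f (clamp a b (conf_var_inv alpha u))). split; [| split].
  - intros u v Hu Huv Hv.
    assert (HA : 0 <= conf_var alpha a)
      by (apply Rdiv_le_0_compat; [apply rpow_ge0 | exact Halpha]).
    assert (Hau : a <= conf_var_inv alpha u).
    { rewrite <- (conf_var_inv_conf_var alpha a) by assumption. apply conf_var_inv_le; lra. }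
    assert (Huv' : conf_var_inv alpha u <= conf_var_inv alpha v)
      by (apply conf_var_inv_le; lra).
    assert (Hvb : conf_var_inv alpha v <= b).
    { rewrite <- (conf_var_inv_conf_var alpha b) by lra. apply conf_var_inv_le; lra. }
    rewrite !clamp_id by lra.
    pose proof (conf_increment_bounds _ _ (conj Hau Huv') Hvb) as Hinc.
    rewrite !conf_var_conf_var_inv in Hinc by lra. exact Hinc.
  - intros u. apply (continuous_comp (conf_var_inv alpha) (fun t => f (clamp a b t))).
    + apply continuous_conf_var_inv, Halpha.
    + apply continuous_conf_clamp.
  - intros t Ht. rewrite conf_var_inv_conf_var, clamp_id by lra. reflexivity.
Qed.

End ConformableMeanValue.

Lemma is_RInt_gen_at_right (h G : R -> R) (a b : R) : a < b -> continuous G a ->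
  (forall x, a < x < b -> is_RInt h x b (G b - G x)) ->
  is_RInt_gen h (at_right a) (at_point b) (G b - G a).
Proof.
  intros Hab HG Hh P [eps Heps].
  destruct (proj1 (filterlim_locally G (G a)) HG eps) as [d Hd].
  apply Filter_prod with (fun x => a < x < b /\ ball a d x) (fun y => y = b).
  - assert (Hd' : 0 < Rmin d (b - a)) by (apply Rmin_glb_lt; [apply cond_pos | lra]).
    exists (mkposreal _ Hd'). intros y Hy Hay. rewrite ball_R in Hy. simpl in Hy.
    assert (Hy1 : Rabs (y - a) < d) by (eapply Rlt_le_trans; [exact Hy | apply Rmin_l]).
    assert (Hy2 : Rabs (y - a) < b - a) by (eapply Rlt_le_trans; [exact Hy | apply Rmin_r]).
    apply Rabs_lt_between in Hy2. rewrite ball_R. split; [lra | exact Hy1].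
  - reflexivity.
  - intros x y [Hx Hxd] ->. exists (G b - G x). split; [apply Hh, Hx |].
    apply Heps. specialize (Hd x Hxd). rewrite ball_R in Hd |- *.
    replace (G b - G x - (G b - G a)) with (- (G x - G a)) by ring.
    rewrite Rabs_Ropp. exact Hd.
Qed.

(* The alpha-integral is improper at a = 0, where t^(alpha-1) blows up. *)
Lemma is_RInt_gen_conf_var (h g : R -> R) (alpha a b : R) : 0 < alpha -> 0 <= a < b ->
  (forall u, continuous g u) -> (forall t, a < t < b -> h t = g (conf_var alpha t)) ->
  is_RInt_gen (fun t => h t * rpow t (alpha - 1)) (at_right a) (at_point b)
    (RInt g (conf_var alpha a) (conf_var alpha b)).
Proof.
  intros Halpha Hab Hg Hh.
  set (A := conf_var alpha a).
  assert (Hexg : forall x y, ex_RInt g x y)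
    by (intros; apply (ex_RInt_continuous (V := R_CompleteNormedModule)); auto).
  set (G := fun x => RInt g A (conf_var alpha x)).
  replace (RInt g A (conf_var alpha b)) with (G b - G a)
    by (unfold G; fold A; rewrite RInt_point; unfold zero; simpl; ring).
  apply is_RInt_gen_at_right; [lra | |].
  - apply (continuous_comp (conf_var alpha) (fun u => RInt g A u));
      [apply continuous_conf_var, Halpha |].
    apply (ex_derive_continuous (fun u => RInt g A u)). exists (g (conf_var alpha a)).
    apply is_derive_RInt with A; [| apply Hg].
    apply filter_forall. intros u. apply RInt_correct, Hexg.
  - intros x Hx.
    assert (HG : G b - G x = RInt g (conf_var alpha x) (conf_var alpha b)).
    { unfold G. rewrite <- (RInt_Chasles g A (conf_var alpha x) (conf_var alpha b)) by auto.
      unfold plus; simpl. ring. }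
    rewrite HG. apply is_RInt_ext with (fun t => scal (rpow t (alpha - 1)) (g (conf_var alpha t))).
    + intros t Ht. rewrite Rmin_left, Rmax_right in Ht by lra.
      rewrite Hh by lra. unfold scal; simpl; unfold mult; simpl. ring.
    + apply (is_RInt_comp (V := R_CompleteNormedModule) g (conf_var alpha)
        (fun t => rpow t (alpha - 1))); [intros; apply Hg |].
      intros t Ht. rewrite Rmin_left, Rmax_right in Ht by lra. split.
      * apply is_derive_conf_var; lra.
      * apply (ex_derive_continuous (fun t => rpow t (alpha - 1))).
        eexists; apply is_derive_rpow; lra.
Qed.

Lemma conf_var_chord_corrections alpha a b lam : 0 < alpha <= 1 -> 0 <= a < b ->
  0 <= lam <= conf_var alpha b - conf_var alpha a ->
  let ell := (b - a) * lam / (conf_var alpha b - conf_var alpha a) in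
  0 <= conf_var alpha b - conf_var alpha (b - ell) <= lam /\
  0 <= conf_var alpha b - conf_var alpha (a + ell) <= conf_var alpha b - conf_var alpha a - lam.
Proof.
  intros Halpha Hab Hlam ell.
  assert (HB : 0 < conf_var alpha b - conf_var alpha a).
  { rewrite conf_var_sub by lra. pose proof (rpow_lt alpha a b ltac:(lra) ltac:(lra)).
    apply Rdiv_lt_0_compat; lra. }
  set (th := lam / (conf_var alpha b - conf_var alpha a)).
  assert (Hth : 0 <= th <= 1).
  { unfold th. split; [apply Rdiv_le_0_compat; lra |].
    apply Rmult_le_reg_r with (conf_var alpha b - conf_var alpha a); [exact HB |].
    unfold Rdiv. rewrite Rmult_assoc, Rinv_l; lra. }
  pose proof (rpow_concave_chord alpha a b th Halpha Hab Hth) as Hc1.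
  pose proof (rpow_concave_chord alpha a b (1 - th) Halpha Hab ltac:(lra)) as Hc2.
  replace (b - th * (b - a)) with (b - ell) in Hc1 by (unfold ell, th; field; lra).
  replace (b - (1 - th) * (b - a)) with (a + ell) in Hc2 by (unfold ell, th; field; lra).
  replace lam with (th * (conf_var alpha b - conf_var alpha a)) by (unfold th; field; lra).
  rewrite !conf_var_sub by lra.
  replace ((rpow b alpha - rpow a alpha) / alpha - th * ((rpow b alpha - rpow a alpha) / alpha))
    with ((1 - th) * ((rpow b alpha - rpow a alpha) / alpha)) by ring.
  assert (Hinv : 0 < / alpha) by (apply Rinv_0_lt_compat; lra).
  unfold Rdiv. rewrite <- !Rmult_assoc.
  split; split; solve [apply Rmult_le_pos; lra | apply Rmult_le_compat_r; lra].
Qed.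

Theorem mainTheorem11 (alpha a b m M : R) (f : R -> R)
  (Halpha : 0 < alpha <= 1) (Ha : 0 <= a) (Hab : a < b) (HmM : m < M)
  (Hdiff : conf_differentiable_on alpha a b f)
  (Hbounds : forall t l, a <= t <= b -> conf_deriv alpha a b f t l -> m <= l <= M)
  (Hcont : filterlim f (at_right a) (locally (f a))) :
  let B := (rpow b alpha - rpow a alpha) / alpha in
  let ell := alpha * (b - a) / ((rpow b alpha - rpow a alpha) * (M - m))
             * (f b - f a - m * B) in
  exists I : R,
    is_RInt_gen (fun t => f t * rpow t (alpha - 1)) (at_right a) (at_point b) I /\
    m / 2 * B ^ 2 + (M - m) / 2 * ((rpow b alpha - rpow (b - ell) alpha) / alpha) ^ 2
      <= I - f a * B /\
    I - f a * B
      <= M / 2 * B ^ 2 + (m - M) / 2 * ((rpow b alpha - rpow (a + ell) alpha) / alpha) ^ 2.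
Proof.
  intros B ell.
  assert (Hal : 0 < alpha) by lra.
  destruct (exists_conf_subst alpha a b m M f Hal Ha (Rlt_le _ _ Hab) Hdiff Hbounds Hcont)
    as (F & HF & HFc & Hsubst).
  exists (RInt F (conf_var alpha a) (conf_var alpha b)). split.
  { apply is_RInt_gen_conf_var; [lra | lra | exact HFc |].
    intros t Ht. symmetry. apply Hsubst; lra. }
  assert (HB : B = conf_var alpha b - conf_var alpha a)
    by (rewrite conf_var_sub by lra; reflexivity).
  assert (Hrab : rpow a alpha < rpow b alpha) by (apply rpow_lt; lra).
  assert (HB0 : 0 < B) by (unfold B; apply Rdiv_lt_0_compat; lra).
  assert (HAB : conf_var alpha a <= conf_var alpha b) by lra.
  pose proof (RInt_slopes_in_lower _ _ _ _ F HAB HmM HFc HF) as Hlow.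
  pose proof (RInt_slopes_in_upper _ _ _ _ F HAB HmM HFc HF) as Hupp.
  pose proof (slopes_in_corner _ _ _ _ F HAB HmM HF) as Hlam.
  cbv zeta in Hlow, Hupp. rewrite !Hsubst, <- HB in Hlow, Hupp, Hlam by lra.
  set (lam := (f b - f a - m * B) / (M - m)) in Hlow, Hupp, Hlam.
  replace ell with ((b - a) * lam / B) by (unfold ell, lam, B; field; repeat split; lra).
  rewrite HB in Hlam.
  destruct (conf_var_chord_corrections alpha a b lam Halpha ltac:(lra) Hlam) as [HX HY].
  rewrite <- HB, !conf_var_sub in HX, HY by lra.
  set (X := (rpow b alpha - rpow (b - (b - a) * lam / B) alpha) / alpha) in *.
  set (Y := (rpow b alpha - rpow (a + (b - a) * lam / B) alpha) / alpha) in *.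
  assert (X ^ 2 <= lam ^ 2) by nra. assert (Y ^ 2 <= (B - lam) ^ 2) by nra.
  split; nra.
Qed.
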